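(* Fix integers $n,d\in\mathbb{N}$, let $\mathcal{A}$ be either the Čech class or the Alpha class of convex sets in $\mathbb{R}^d$, and let $\mathcal{Q}$ be a probability distribution on $(\mathbb{R}^d)^n$. Every graph $\Gamma$ that is feasible (for $d$, $n$, $\mathcal{A}$, $\mathcal{Q}$) is isomorphic to $\mathcal{G}(\mathcal{V},r,\mathcal{A})$ for some collection $\mathcal{V}$ of $n$ points in the closed unit ball $\mathbb{B}^d\subset\mathbb{R}^d$ and $r=1/n$.
   Context: For a finite collection $F=\{A_j : j\in I\}$ of nonempty convex sets, its nerve is $\mathrm{Nrv}(F)=\{\sigma\subseteq I : \bigcap_{j\in\sigma}A_j\neq\varnothing\}$. For a finite point set $\mathcal{V}=\{v_1,\dots,v_n\}\subset\mathbb{R}^d$ and $r>0$, let $B_{v,r}=v+r\mathbb{B}^d$ be the closed ball of radius $r$ about $v$ and $C_v=\{x\in\mathbb{R}^d:\|x-v\|\le\|x-u\|\ \forall u\in\mathcal{V}\}$ the Voronoi cell of $v$. The Čech complex is the nerve of $\{B_{v,r}: v\in\mathcal{V}\}$; the Alpha complex is the nerve of $\{B_{v,r}\cap C_v : v\in\mathcal{V}\}$. The graph $\mathcal{G}(\mathcal{V},r,\mathcal{A})$ is the 1-skeleton of the corresponding complex: vertex set $\mathcal{V}$, with $\{v_i,v_j\}$ an edge iff the two sets associated with $v_i$ and $v_j$ intersect. Two graphs are isomorphic if there is a bijection of vertex sets preserving adjacency in both directions. Given $d,n$, a class $\mathcal{A}$, and a distribution $\mathcal{Q}$ of random vectors $\mathbf{V}=(V_1,\dots,V_n)$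 in $(\mathbb{R}^d)^n$, a graph $\Gamma$ is called feasible if for some $r>0$, $\Pr\{\mathcal{G}(\mathbf{V},r,\mathcal{A})\cong\Gamma\}>0$ when $\mathbf{V}\sim\mathcal{Q}$. *)

From HB Require Import structures.
From mathcomp Require Import all_boot all_order all_algebra.
From mathcomp Require Import all_classical all_reals all_analysis.
Set Implicit Arguments. Unset Strict Implicit. Unset Printing Implicit Defensive.
Import Order.TTheory GRing.Theory Num.Theory.
Local Open Scope ring_scope.
Local Open Scope classical_set_scope.

(* A point of R^d is a d-tuple of reals; a configuration (V_1,...,V_n) is an
   n-tuple of points.  n.-tuple T carries mathcomp-analysis' product
   sigma-algebra (generated by the coordinate maps), which for R^d is the
   Borel sigma-algebra. *)
Definition point (R : realType) (d : nat) := d.-tuple R.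
Definition config (R : realType) (d n : nat) := n.-tuple (d.-tuple R).

Definition sqdist (R : realType) (d : nat) (x y : d.-tuple R) : R :=
  \sum_(k < d) (tnth x k - tnth y k) ^+ 2.
Definition enorm (R : realType) (d : nat) (x : d.-tuple R) : R :=
  Num.sqrt (\sum_(k < d) (tnth x k) ^+ 2).

Definition cball (R : realType) (d : nat) (v : d.-tuple R) (r : R) : set (d.-tuple R) :=
  [set x | Num.sqrt (sqdist x v) <= r].

Definition voronoi (R : realType) (d n : nat) (V : config R d n) (i : 'I_n)
  : set (d.-tuple R) :=
  [set x | forall j : 'I_n, Num.sqrt (sqdist x (tnth V i)) <= Num.sqrt (sqdist x (tnth V j))].

Inductive cclass := Cech | Alpha.

Definition cset (R : realType) (d n : nat) (A : cclass) (V : config R d n) (r : R)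
  (i : 'I_n) : set (d.-tuple R) :=
  match A with
  | Cech => cball (tnth V i) r
  | Alpha => cball (tnth V i) r `&` voronoi V i
  end.

(* 1-skeleton of the nerve: the graph G(V, r, A) on vertex set 'I_n
   (vertex i stands for the point V_i) *)
Definition nerve_adj (R : realType) (d n : nat) (A : cclass) (V : config R d n) (r : R)
  (i j : 'I_n) : Prop :=
  i <> j /\ cset A V r i `&` cset A V r j !=set0.

Definition nerve_iso (R : realType) (d n : nat) (A : cclass) (V : config R d n) (r : R)
  (T : finType) (e : rel T) : Prop :=
  exists f : 'I_n -> T, bijective f /\
    forall i j : 'I_n, nerve_adj A V r i j <-> e (f i) (f j).

Definition feasible (R : realType) (d n : nat) (A : cclass)
  (Q : probability (config R d n) R) (T : finType) (e : rel T) : Prop :=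
  exists r : R, 0 < r /\ (0 < Q [set V | nerve_iso A V r e])%E.

From HB Require Import structures.
From mathcomp Require Import all_boot all_order all_algebra.
From mathcomp Require Import all_classical all_reals all_analysis.
From mathcomp Require Import ring lra zify.
Set Implicit Arguments. Unset Strict Implicit. Unset Printing Implicit Defensive.
Import Order.TTheory GRing.Theory Num.Theory.
Local Open Scope ring_scope.

(* A realizing configuration V0 at some radius r0 exists since the event has
   positive probability.  Only points whose r0-balls meet can be adjacent, so
   the graph only sees the connected components of the relation "balls meet".
   Rescale by r / r0 with r = 1/n: neighbours are then at distance at most
   L = r (2 + r).  A component of k points lies in a ball of radius
   (k - 1) L / 2 (merge balls one neighbour at a time), and translating the
   components one after another, each L beyond the previous one along the
   first axis, puts all n points in a ball of radius (n - 1) L / 2 <= 1.  Points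
   of different components stay more than 2 r apart, and the similarity on each
   component preserves both the balls and the Voronoi comparisons that matter,
   so the Cech and Alpha graphs are unchanged. *)

Section L2Norm.
Variables (R : realType) (d : nat).
Implicit Types (f g : 'I_d -> R).

Definition l2norm f : R := Num.sqrt (\sum_k f k ^+ 2).

Lemma sum_sqr_ge0 f : 0 <= \sum_k f k ^+ 2.
Proof. by apply: sumr_ge0 => k _; exact: sqr_ge0. Qed.

Lemma eq_l2norm f g : f =1 g -> l2norm f = l2norm g.
Proof. by move=> fg; rewrite /l2norm; under eq_bigr do rewrite fg. Qed.

Lemma cauchy_schwarz f g :
  (\sum_k f k * g k) ^+ 2 <= (\sum_k f k ^+ 2) * (\sum_k g k ^+ 2).
Proof.
set A := \sum_k f k ^+ 2; set B := \sum_k g k ^+ 2; set C := \sum_k f k * g k.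
have [B_gt0|B_le0] := ltrP 0 B.
  have expand : \sum_k (B * f k - C * g k) ^+ 2 = B * (B * A - C ^+ 2).
    rewrite (eq_bigr (fun k => B ^+ 2 * f k ^+ 2 - 2 * B * C * (f k * g k) + C ^+ 2 * g k ^+ 2));
      last by move=> k _; ring.
    by rewrite !big_split /= sumrN -!mulr_sumr -/A -/B -/C; ring.
  have : 0 <= B * (B * A - C ^+ 2).
    by rewrite -expand; apply: sumr_ge0 => k _; exact: sqr_ge0.
  by rewrite pmulr_rge0 // subr_ge0 mulrC.
have B0 : B = 0 by apply/eqP; rewrite eq_le B_le0 sum_sqr_ge0.
have g0 k : g k = 0.
  by apply/eqP; rewrite -sqrf_eq0; apply/eqP; apply: psumr_eq0P B0 _ _ => // i _; exact: sqr_ge0.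
rewrite /C big1 => [|k _]; last by rewrite g0 mulr0.
by rewrite expr0n mulr_ge0 ?sum_sqr_ge0.
Qed.

Lemma l2normD f g : l2norm (fun k => f k + g k) <= l2norm f + l2norm g.
Proof.
rewrite /l2norm -(ger0_norm (addr_ge0 (sqrtr_ge0 _) (sqrtr_ge0 _))) -sqrtr_sqr.
rewrite ler_sqrt ?sqr_ge0 // sqrrD !sqr_sqrtr ?sum_sqr_ge0 //.
rewrite (eq_bigr (fun k => f k ^+ 2 + 2 * (f k * g k) + g k ^+ 2)); last by move=> k _; ring.
rewrite !big_split /= -mulr_sumr -sqrtrM ?sum_sqr_ge0 //.
suff : \sum_k f k * g k <= Num.sqrt ((\sum_k f k ^+ 2) * \sum_k g k ^+ 2) by lra.
apply: le_trans (ler_norm _) _.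
by rewrite -sqrtr_sqr ler_sqrt ?mulr_ge0 ?sum_sqr_ge0 ?cauchy_schwarz.
Qed.

Lemma l2normZ (s : R) f : l2norm (fun k => s * f k) = `|s| * l2norm f.
Proof.
rewrite /l2norm; under eq_bigr do rewrite exprMn.
by rewrite -mulr_sumr sqrtrM ?sqr_ge0 // sqrtr_sqr.
Qed.

Lemma ler_coord_l2norm f k : `|f k| <= l2norm f.
Proof.
rewrite /l2norm -sqrtr_sqr ler_sqrt ?sum_sqr_ge0 // (bigD1 k) //= lerDl.
by apply: sumr_ge0 => i _; exact: sqr_ge0.
Qed.

End L2Norm.

Section Distance.
Variables (R : realType) (d : nat).
Implicit Types (a b c x y z : d.-tuple R).

Definition dist x y : R := Num.sqrt (sqdist x y).

Definition translate x (v : 'I_d -> R) : d.-tuple R := [tuple tnth x k + v k | k < d].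

Lemma distE x y : dist x y = l2norm (fun k => tnth x k - tnth y k).
Proof. by []. Qed.

Lemma dist_ge0 x y : 0 <= dist x y.
Proof. exact: sqrtr_ge0. Qed.

Lemma dist_similar a b x y (s : R) : 0 <= s ->
  (forall k, tnth a k - tnth b k = s * (tnth x k - tnth y k)) ->
  dist a b = s * dist x y.
Proof. by move=> s_ge0 ab; rewrite !distE (eq_l2norm ab) l2normZ ger0_norm. Qed.

Lemma dist_translate a b x y :
  (forall k, tnth a k - tnth b k = tnth x k - tnth y k) -> dist a b = dist x y.
Proof.
by move=> ab; rewrite (@dist_similar _ _ x y 1) ?mul1r // => k; rewrite mul1r.
Qed.

Lemma distxx x : dist x x = 0.
Proof. by rewrite (@dist_similar _ _ x x 0) ?mul0r // => k; rewrite subrr mul0r. Qed.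

Lemma distC x y : dist x y = dist y x.
Proof.
rewrite !distE (@eq_l2norm _ _ _ (fun k => -1 * (tnth y k - tnth x k))) => [|k].
  by rewrite l2normZ normrN normr1 mul1r.
by rewrite mulN1r opprB.
Qed.

Lemma dist_triangle x y z : dist x z <= dist x y + dist y z.
Proof.
rewrite !distE (@eq_l2norm _ _ _ (fun k => (tnth x k - tnth y k) + (tnth y k - tnth z k))).
  exact: l2normD.
by move=> k; rewrite addrA subrK.
Qed.

Lemma ler_coord_dist x y k : `|tnth x k - tnth y k| <= dist x y.
Proof. exact: (ler_coord_l2norm (fun k => tnth x k - tnth y k)). Qed.

Lemma ler_coord_gap x y k (L : R) : tnth x k + L <= tnth y k -> L <= dist x y.
Proof.
move=> gap; rewrite distC; apply: le_trans _ (ler_coord_dist y x k).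
by apply: le_trans _ (ler_norm _); lra.
Qed.

Lemma dist_translate_axis x k0 (L : R) :
  dist x (translate x (fun k => (k == k0)%:R * L)) = `|L|.
Proof.
rewrite /dist /sqdist (bigD1 k0) //= big1 => [|k k_neq0].
  by rewrite tnth_mktuple eqxx mul1r addr0 opprD addrA subrr add0r sqrrN sqrtr_sqr.
by rewrite tnth_mktuple (negbTE k_neq0) mul0r addr0 subrr expr0n.
Qed.

(* Two balls containing points p and q with |p - q| <= L lie in a common ball
   whose center divides [c1, c2] in the ratio (r2 + L/2) : (r1 + L/2). *)
Lemma merge_balls c1 c2 p q (r1 r2 L : R) : 0 <= r1 -> 0 <= r2 -> 0 < L ->
  dist p c1 <= r1 -> dist q c2 <= r2 -> dist p q <= L ->
  exists c, (forall x, dist x c1 <= r1 -> dist x c <= r1 + r2 + L / 2) /\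
            (forall x, dist x c2 <= r2 -> dist x c <= r1 + r2 + L / 2).
Proof.
move=> r1_ge0 r2_ge0 L_gt0 pc1 qc2 pq.
set D := dist c1 c2; set S := r1 + r2 + L.
have D_le : D <= S.
  have := dist_triangle c1 p c2; have := dist_triangle p q c2.
  rewrite /D /S (distC c1 p); lra.
have S_gt0 : 0 < S by rewrite /S; lra.
set l := (r2 + L / 2) / S.
have l_ge0 : 0 <= l by rewrite divr_ge0 //; lra.
have one_sub_l : 1 - l = (r1 + L / 2) / S by rewrite /l /S; field; lra.
pose m := translate c1 (fun k => l * (tnth c2 k - tnth c1 k)).
have m_c1 : dist m c1 = l * D.
  by rewrite /D distC; apply: dist_similar => // k; rewrite tnth_mktuple; ring.
have m_c2 : dist m c2 = (1 - l) * D.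
  apply: dist_similar => [|k]; last by rewrite tnth_mktuple; ring.
  by rewrite one_sub_l divr_ge0 //; lra.
have lD : l * D <= r2 + L / 2.
  by rewrite /l mulrAC ler_pdivrMr // ler_wpM2l //; lra.
have l'D : (1 - l) * D <= r1 + L / 2.
  by rewrite one_sub_l mulrAC ler_pdivrMr // ler_wpM2l //; lra.
exists m; split=> x xc.
  by have := dist_triangle x c1 m; rewrite (distC c1); lra.
by have := dist_triangle x c2 m; rewrite (distC c2); lra.
Qed.

End Distance.

Section Similarity.
Variables (R : realType) (d n : nat) (A : cclass).
Implicit Types (V W : config R d n) (r s : R).

Lemma cset_dist V r l x : cset A V r l x -> dist x (tnth V l) <= r.
Proof. by case: A => // -[]. Qed.

Lemma cset_similar V W r s l x y : 0 < s -> cset A V r l x ->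
  (forall u, dist y (tnth W u) = s * dist x (tnth V u) \/
             2 * (s * r) < dist (tnth W l) (tnth W u)) ->
  cset A W (s * r) l y.
Proof.
move=> s_gt0 xl yW.
have sr_ge0 : 0 <= s * r.
  by apply: mulr_ge0; [exact: ltW | exact: le_trans (dist_ge0 _ _) (cset_dist xl)].
have yl : dist y (tnth W l) = s * dist x (tnth V l).
  by case: (yW l) => //; rewrite distxx; lra.
have yl_le : dist y (tnth W l) <= s * r.
  by rewrite yl ler_pM2l //; exact: cset_dist xl.
case: A xl => [//|[_ x_vor]]; split=> // u.
change (dist y (tnth W l) <= dist y (tnth W u)).
have [->|far] := yW u; first by rewrite yl ler_pM2l //; exact: x_vor.
by have := dist_triangle (tnth W l) y (tnth W u); rewrite (distC _ y); lra.
Qed.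

(* The level sets of t are blocks moved by one similarity x |-> s x + t u each;
   points of different blocks are too far apart for their sets to meet. *)
Definition piecewise_similar V W r s (t : 'I_n -> 'I_d -> R) :=
  (forall u k, tnth (tnth W u) k = s * tnth (tnth V u) k + t u k) /\
  (forall u v, t u <> t v ->
     2 * r < dist (tnth V u) (tnth V v) /\ 2 * (s * r) < dist (tnth W u) (tnth W v)).

Lemma nerve_adj_similar V W r s t i j : 0 < s -> piecewise_similar V W r s t ->
  nerve_adj A V r i j -> nerve_adj A W (s * r) i j.
Proof.
move=> s_gt0 [Wst far] [ij [x [xi xj]]]; split=> //.
have tij : t i = t j.
  apply: contrapT => /far[+ _].
  have := dist_triangle (tnth V i) x (tnth V j); rewrite (distC _ x).
  by have := cset_dist xi; have := cset_dist xj; lra.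
pose y := [tuple s * tnth x k + t i k | k < d].
have y_in l : t l = t i -> cset A V r l x -> cset A W (s * r) l y.
  move=> tli xl; apply: (cset_similar s_gt0 xl) => u.
  have [tui|tui] := pselect (t u = t i).
    left; apply: dist_similar (ltW s_gt0) _ => k.
    by rewrite tnth_mktuple Wst tui; ring.
  by right; apply: (far l u _).2; rewrite tli => /esym.
by exists y; split; [exact: y_in xi | exact: y_in (esym tij) xj].
Qed.

Lemma nerve_iso_similar V W r s t (T : finType) (e : rel T) :
  0 < s -> piecewise_similar V W r s t ->
  nerve_iso A V r e -> nerve_iso A W (s * r) e.
Proof.
move=> s_gt0 sim [f [f_bij fe]]; exists f; split=> // i j; rewrite -fe.
have sim' : piecewise_similar W V (s * r) s^-1 (fun u k => - (s^-1 * t u k)).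
  case: sim => Wst far; split=> [u k|u v tuv].
    by rewrite Wst; field; exact: lt0r_neq0.
  rewrite mulKf ?lt0r_neq0 //; have [|Vuv Wuv] := far u v; last by [].
  by move=> tu; apply: tuv; rewrite tu.
split; last exact: nerve_adj_similar s_gt0 sim.
have si_gt0 : 0 < s^-1 by rewrite invr_gt0.
by move/(nerve_adj_similar si_gt0 sim'); rewrite mulKf ?lt0r_neq0.
Qed.

End Similarity.

Lemma connect_exit_edge (T : finType) (e : rel T) (S : {set T}) x y :
  connect e x y -> x \in S -> y \notin S -> exists a b, [/\ a \in S, b \notin S & e a b].
Proof.
move=> /connectP[p]; elim: p x => [|z p IH] x /=; first by move=> _ -> ->.
move=> /andP[xz zp] y_last xS; have [zS|zNS] := boolP (z \in S).
  exact: IH zS.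
by exists x, z.
Qed.

Lemma exists_argmax (R : realType) (T : finType) (S : {set T}) (f : T -> R) i0 :
  i0 \in S -> exists2 p, p \in S & {in S, forall i, f i <= f p}.
Proof. by move=> i0S; case: (arg_maxP f i0S) => p pS pmax; exists p. Qed.

Lemma chain_radius_ge0 (R : realType) (m : nat) (L : R) :
  (0 < m)%N -> 0 <= L -> 0 <= (m%:R - 1) * L / 2.
Proof. by move=> m_gt0 L_ge0; rewrite divr_ge0 // mulr_ge0 // subr_ge0 ler1n. Qed.

Lemma chain_radius_setU (R : realType) (T : finType) (K S : {set T}) (L : R) :
  [disjoint K & S] ->
  (#|K :|: S|%:R - 1) * L / 2 = (#|S|%:R - 1) * L / 2 + (#|K|%:R - 1) * L / 2 + L / 2.
Proof. by move=> KS; rewrite cardsU (disjoint_setI0 KS) cards0 subn0 natrD; ring. Qed.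

Section ComponentBall.
Variables (R : realType) (d n : nat) (close : rel 'I_n) (P : 'I_n -> d.-tuple R) (L : R).
Hypotheses (L_gt0 : 0 < L) (closeP : forall a b, close a b -> dist (P a) (P b) <= L).
Let L_ge0 : 0 <= L := ltW L_gt0.

(* Grow a subset of the component one close neighbour at a time, merging the
   ball around it with the degenerate ball {P b} at each step. *)
Lemma component_subball i0 k : (k < #|[set j | connect close i0 j]|)%N ->
  exists S : {set 'I_n}, [/\ S \subset [set j | connect close i0 j], i0 \in S,
    #|S| = k.+1 & exists c, {in S, forall j, dist (P j) c <= k%:R * L / 2}].
Proof.
set K := [set j | connect close i0 j].
elim: k => [|k IH] k_lt.
  exists [set i0]; split; rewrite ?inE ?cards1 //.
    by rewrite finset.sub1set inE connect0.
  by exists (P i0) => j; rewrite inE => /eqP->; rewrite distxx !mul0r.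
have [S [SK i0S cardS [c cS]]] := IH (ltnW k_lt).
have /subsetPn[b0 b0K b0S] : ~~ (K \subset S).
  by apply/negP => /subset_leq_card; rewrite cardS; lia.
have i0b0 : connect close i0 b0 by move: b0K; rewrite inE.
have [a [b [aS bS ab]]] := connect_exit_edge i0b0 i0S b0S.
have bK : b \in K.
  by move: (fintype.subsetP SK a aS); rewrite !inE => i0a; apply: connect_trans i0a (connect1 ab).
have k_ge0 : 0 <= k%:R * L / 2 :> R by rewrite divr_ge0 ?mulr_ge0.
have bb : dist (P b) (P b) <= 0 by rewrite distxx.
have [c' [Sc' bc']] := merge_balls k_ge0 (lexx 0) L_gt0 (cS a aS) bb (closeP ab).
exists (b |: S); split.
- by rewrite finset.subUset finset.sub1set bK SK.
- by rewrite setU1r.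
- by rewrite cardsU1 bS cardS.
exists c' => j; rewrite -natr1 !inE => /orP[/eqP->|jS].
  by have := bc' _ bb; lra.
by have := Sc' _ (cS j jS); lra.
Qed.

Lemma component_ball i0 : exists c,
  {in [set j | connect close i0 j], forall j,
    dist (P j) c <= (#|[set j | connect close i0 j]|%:R - 1) * L / 2}.
Proof.
set K := [set j | connect close i0 j].
have K_gt0 : (0 < #|K|)%N by apply/card_gt0P; exists i0; rewrite inE connect0.
have K_pred : (#|K|.-1 < #|K|)%N by rewrite prednK.
have [S [SK _ cardS [c cS]]] := component_subball K_pred.
have SK_eq : S = K by apply/eqP; rewrite eqEcard cardS prednK // leqnn andbT.
by exists c; rewrite -SK_eq cardS -natr1 addrK.
Qed.

End ComponentBall.

Section Layout.
Variables (R : realType) (d n : nat) (close : rel 'I_n) (P : 'I_n -> d.+1.-tuple R) (L : R).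
Hypotheses (close_sym : symmetric close) (L_gt0 : 0 < L)
  (closeP : forall a b, close a b -> dist (P a) (P b) <= L).
Let L_ge0 : 0 <= L := ltW L_gt0.

(* Each component inside S is translated by its own vector; p marks the largest
   first coordinate, beyond which the next component gets placed. *)
Definition layout (S : {set 'I_n}) (t : 'I_n -> 'I_d.+1 -> R) (c : d.+1.-tuple R) p :=
  [/\ p \in S,
      {in S &, forall i j, connect close i j -> t i = t j},
      {in S &, forall i j, t i <> t j ->
         L <= dist (translate (P i) (t i)) (translate (P j) (t j))},
      {in S, forall i, tnth (translate (P i) (t i)) ord0 <= tnth (translate (P p) (t p)) ord0} &
      {in S, forall i, dist (translate (P i) (t i)) c <= (#|S|%:R - 1) * L / 2}].

Lemma layout_component i0 : exists c p,
  layout [set j | connect close i0 j] (fun _ _ => 0) c p.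
Proof.
set K := [set j | connect close i0 j].
have [c cK] := component_ball L_gt0 closeP i0.
have P0 i : translate (P i) (fun _ => 0) = P i.
  by apply: eq_from_tnth => k; rewrite tnth_mktuple addr0.
have i0K : i0 \in K by rewrite inE connect0.
have [p pK pmax] := exists_argmax (fun i => tnth (P i) ord0) i0K.
by exists c, p; split=> // [i iK|i iK]; rewrite !P0; [exact: pmax | exact: cK].
Qed.

(* The component is translated so that its leftmost point P q lands at
   distance L beyond [top] along the first axis. *)
Lemma place_component_beyond i0 (top : d.+1.-tuple R) : exists v q,
  [/\ q \in [set j | connect close i0 j], dist top (translate (P q) v) <= L &
      {in [set j | connect close i0 j], forall i,
         tnth top ord0 + L <= tnth (translate (P i) v) ord0}].
Proof.
have i0K : i0 \in [set j | connect close i0 j] by rewrite inE connect0.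
have [q qK qmin] := exists_argmax (fun i => - tnth (P i) ord0) i0K.
exists (fun k => tnth top k + (k == ord0)%:R * L - tnth (P q) k), q; split=> //.
  rewrite (_ : translate (P q) _ = translate top (fun k => (k == ord0)%:R * L)).
    by rewrite dist_translate_axis ger0_norm.
  by apply: eq_from_tnth => k; rewrite !tnth_mktuple; ring.
by move=> i iK; rewrite tnth_mktuple eqxx mul1r; have := qmin i iK; lra.
Qed.

Lemma layout_add_component i0 (S : {set 'I_n}) t' c' p' :
  [disjoint [set j | connect close i0 j] & S] -> layout S t' c' p' ->
  exists t c p, layout ([set j | connect close i0 j] :|: S) t c p.
Proof.
set K := [set j | connect close i0 j] => KS [p'S t'_con t'_sep t'_top t'_ball].
have SNK i : i \in S -> i \notin K by move=> iS; rewrite (disjointFl KS iS).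
have i0K : i0 \in K by rewrite inE connect0.
have K_connect i j : i \in K -> connect close i j -> j \in K.
  by rewrite !inE => i0i; exact: connect_trans i0i.
have [cK cKb] := component_ball L_gt0 closeP i0.
have [pK pKK pKmax] := exists_argmax (fun i => tnth (P i) ord0) i0K.
pose top := translate (P p') (t' p').
have [v [q [qK top_q beyond]]] := place_component_beyond i0 top.
pose t i := if i \in K then v else t' i.
have tK i : i \in K -> t i = v by rewrite /t => ->.
have tS i : i \in S -> t i = t' i by move=> /SNK iNK; rewrite /t (negbTE iNK).
have gap i j : i \in K -> j \in S ->
    tnth (translate (P j) (t j)) ord0 + L <= tnth (translate (P i) (t i)) ord0.
  move=> iK jS; rewrite (tK i iK) (tS j jS); apply: le_trans (beyond i iK).
  by rewrite lerD2r; exact: t'_top.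
have K_ball i : i \in K -> dist (translate (P i) v) (translate cK v) <= (#|K|%:R - 1) * L / 2.
  move=> iK; rewrite (@dist_translate _ _ _ _ (P i) cK); first exact: cKb.
  by move=> k; rewrite !tnth_mktuple; ring.
have S_gt0 : (0 < #|S|)%N by apply/card_gt0P; exists p'.
have K_gt0 : (0 < #|K|)%N by apply/card_gt0P; exists i0.
have [c [cS cK']] := merge_balls (chain_radius_ge0 S_gt0 L_ge0) (chain_radius_ge0 K_gt0 L_ge0)
  L_gt0 (t'_ball p' p'S) (K_ball q qK) top_q.
exists t, c, pK; split.
- by rewrite inE pKK.
- move=> i j /setUP[iK|iS] /setUP[jK|jS] ij.
  + by rewrite (tK i iK) (tK j jK).
  + by have := SNK j jS; rewrite (K_connect i j iK ij).
  + by have := SNK i iS; rewrite (K_connect j i jK) // (sym_connect_sym close_sym).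
  + by rewrite (tS i iS) (tS j jS); exact: t'_con.
- move=> i j /setUP[iK|iS] /setUP[jK|jS] tij.
  + by rewrite (tK i iK) (tK j jK) in tij.
  + by rewrite distC; apply: ler_coord_gap; exact: gap.
  + by apply: ler_coord_gap; exact: gap.
  + by move: tij; rewrite (tS i iS) (tS j jS); exact: t'_sep.
- move=> i /setUP[iK|iS]; last first.
    by apply: le_trans (gap pK i pKK iS); rewrite lerDl.
  by rewrite (tK i iK) (tK pK pKK) !tnth_mktuple; have := pKmax i iK; lra.
move=> i /setUP[iK|iS]; rewrite (chain_radius_setU _ KS).
  by rewrite (tK i iK); apply: cK'; exact: K_ball.
by rewrite (tS i iS); apply: cS; exact: t'_ball.
Qed.

Lemma exists_layout (S : {set 'I_n}) i0 : i0 \in S ->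
  {in S, forall i j, connect close i j -> j \in S} -> exists t c p, layout S t c p.
Proof.
elim: {S}_.+1 {-2}S (ltnSn #|S|) i0 => // m IH S S_lt i0 i0S S_closed.
set K := [set j | connect close i0 j].
have KS : K \subset S by apply/fintype.subsetP => j; rewrite inE; exact: S_closed.
have [SK|/subsetPn[j0 j0S j0K]] := boolP (S \subset K).
  have -> : S = K by apply/eqP; rewrite finset.eqEsubset SK KS.
  by have [c [p lay]] := layout_component i0; exists (fun _ _ => 0), c, p.
have S'_lt : (#|S :\: K| < m)%N.
  have K_gt0 : (0 < #|K|)%N by apply/card_gt0P; exists i0; rewrite inE connect0.
  have S_gt0 : (0 < #|S|)%N by apply/card_gt0P; exists i0.
  move: S_lt; rewrite ltnS cardsD (finset.setIidPr KS); apply: leq_trans.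
  by rewrite ltn_subrL K_gt0.
have j0S' : j0 \in S :\: K by rewrite inE j0S j0K.
have S'_closed : {in S :\: K, forall i j, connect close i j -> j \in S :\: K}.
  move=> i /finset.setDP[iS iK] j ij; rewrite inE (S_closed i) // andbT.
  apply: contra iK; rewrite !inE => i0j; apply: connect_trans i0j _.
  by rewrite sym_connect_sym.
have [t' [c' [p' lay']]] := IH _ S'_lt _ j0S' S'_closed.
have -> : S = K :|: (S :\: K) by rewrite -{1}(finset.setID S K) (finset.setIidPr KS).
apply: layout_add_component lay'; rewrite finset.disjoints_subset.
by apply/fintype.subsetP => j; rewrite !inE => ->.
Qed.

End Layout.

(* Points whose r0-balls meet are rescaled to distance <= 2 r < L, so
   components placed L apart can never interact. *)
Lemma layout_rescaled_config (R : realType) (d n : nat) (V0 : config R d.+1 n) (r0 r : R) :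
  (0 < n)%N -> 0 < r0 -> 0 < r ->
  exists (V : config R d.+1 n) (t : 'I_n -> 'I_d.+1 -> R),
    (forall i, enorm (tnth V i) <= (n%:R - 1) * (r * (2 + r)) / 2) /\
    piecewise_similar V0 V r0 (r / r0) t.
Proof.
move=> n_gt0 r0_gt0 r_gt0.
set s := r / r0; set L := r * (2 + r).
have s_gt0 : 0 < s by rewrite divr_gt0.
have sr0 : s * r0 = r by rewrite divfK ?lt0r_neq0.
pose P i := [tuple s * tnth (tnth V0 i) k | k < d.+1].
pose close a b := dist (tnth V0 a) (tnth V0 b) <= 2 * r0.
have close_sym : symmetric close by move=> a b; rewrite /close distC.
have L_gt0 : 0 < L by rewrite /L; nra.
have closeP a b : close a b -> dist (P a) (P b) <= L.
  move=> ab; rewrite (@dist_similar _ _ _ _ (tnth V0 a) (tnth V0 b) s) ?(ltW s_gt0) //.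
    have : s * dist (tnth V0 a) (tnth V0 b) <= s * (2 * r0) by rewrite ler_pM2l.
    by rewrite /L; nra.
  by move=> k; rewrite !tnth_mktuple; ring.
have [t [c [_ [_ t_con t_sep _ t_ball]]]] := exists_layout close_sym L_gt0 closeP
  (finset.in_setT (Ordinal n_gt0)) (fun _ _ _ _ => finset.in_setT _).
pose W i := translate (P i) (t i).
pose V := [tuple [tuple tnth (W i) k - tnth c k | k < d.+1] | i < n].
have tV i k : tnth (tnth V i) k = tnth (W i) k - tnth c k by rewrite !tnth_mktuple.
exists V, (fun i k => t i k - tnth c k); split=> [i|].
  have -> : enorm (tnth V i) = dist (W i) c.
    by rewrite /enorm /dist /sqdist; apply: congr1; apply: eq_bigr => k _; rewrite tV.
  by have := t_ball i (finset.in_setT _); rewrite cardsT card_ord.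
split=> [u k|u v tuv]; first by rewrite tV !tnth_mktuple; ring.
have {}tuv : t u <> t v by move=> tu; apply: tuv; rewrite tu.
split.
  rewrite ltNge; apply/negP => uv; apply: tuv.
  by apply: t_con; rewrite ?finset.in_setT ?connect1.
have VW : dist (tnth V u) (tnth V v) = dist (W u) (W v).
  by apply: dist_translate => k; rewrite !tV; ring.
rewrite sr0 VW; apply: lt_le_trans _ (t_sep u v (finset.in_setT _) (finset.in_setT _) tuv).
by rewrite /L; nra.
Qed.

Lemma exists_similar_config_in_ball (R : realType) (d n : nat) (V0 : config R d n)
    (r0 r : R) : (0 < n)%N -> 0 < r0 -> 0 < r ->
  exists (V : config R d n) (t : 'I_n -> 'I_d -> R),
    (forall i, enorm (tnth V i) <= (n%:R - 1) * (r * (2 + r)) / 2) /\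
    piecewise_similar V0 V r0 (r / r0) t.
Proof.
move=> n_gt0 r0_gt0 r_gt0.
case: d => [|d] in V0 *; last exact: layout_rescaled_config.
exists V0, (fun _ _ => 0); split=> [i|]; last by split=> [u []|u v []].
rewrite /enorm big_ord0 sqrtr0; apply: chain_radius_ge0 => //; nra.
Qed.

Theorem mainTheorem1 (R : realType) (n d : nat) (A : cclass)
  (Q : probability (config R d n) R) (T : finType) (e : rel T) :
  feasible A Q e ->
  exists V : config R d n,
    (forall i : 'I_n, enorm (tnth V i) <= 1) /\
    nerve_iso A V (n%:R)^-1 e.
Proof.
move=> [r0 [r0_gt0 Q_gt0]].
have /set0P[V0 iso0] : [set V : config R d n | nerve_iso A V r0 e]%classic != set0.
  by apply: contraTneq Q_gt0 => ->; rewrite measure0 ltxx.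
clear Q Q_gt0; case: n => [|n] in V0 iso0 *.
  exists V0; split=> [[]//|]; case: iso0 => [f [f_bij _]].
  by exists f; split=> // -[].
set r := (n.+1%:R)^-1 : R.
have r_gt0 : 0 < r by rewrite invr_gt0 ltr0n.
have [V [t [V_ball sim]]] := exists_similar_config_in_ball V0 (ltn0Sn n) r0_gt0 r_gt0.
exists V; split.
  move=> i; apply: le_trans (V_ball i) _.
  have nr : n.+1%:R * r = 1 by rewrite mulfV ?pnatr_eq0.
  have r_le1 : r <= 1 by rewrite invf_le1 ?ltr0n // ler1n.
  by rewrite mulrA mulrBl nr mul1r; nra.
have s_gt0 : 0 < r / r0 by rewrite divr_gt0.
by rewrite -[r](divfK (lt0r_neq0 r0_gt0)); exact: nerve_iso_similar s_gt0 sim iso0.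
Qed.
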